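(* For every integer $r\ge0$, \[ \sum_{n=1}^{\infty}\frac{h_n^{(r)}}{(n+1)(n+2)\cdots(n+r+1)}=\frac{1}{r!}, \] equivalently $\sum_{n=1}^{\infty}h_n^{(r)}B(r+1,n+1)=1$.
   Context: Hyperharmonic numbers: $h_n^{(0)}=1/n$ for $n\ge1$, and for $r\ge1$, $h_n^{(r)}=\sum_{j=1}^{n}h_j^{(r-1)}$. $B(x,y)=\int_0^1t^{x-1}(1-t)^{y-1}\,dt$ is the Beta function. *)

From Stdlib Require Import Reals.
Open Scope R_scope.

(* Hyperharmonic numbers h_n^{(r)} (meaningful for n >= 1; h_0^{(r)} := 0,
   which is consistent with the empty-sum convention for r >= 1). *)
Fixpoint hyperharmonic (r : nat) : nat -> R :=
  match r with
  | O => fun n => match n with O => 0 | _ => / INR n end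
  | S r' => fix H (n : nat) : R :=
      match n with
      | O => 0
      | S m => H m + hyperharmonic r' (S m)
      end
  end.

Fixpoint rising_from (n k : nat) : R :=
  match k with
  | O => 1
  | S k' => rising_from n k' * INR (n + S k')
  end.

Lemma hyperharmonic_0 (n : nat) : (1 <= n)%nat -> hyperharmonic 0 n = / INR n.
Proof. destruct n; [intro H; inversion H | reflexivity]. Qed.
Lemma hyperharmonic_S (r n : nat) :
  hyperharmonic (S r) (S n) = hyperharmonic (S r) n + hyperharmonic r (S n).
Proof. reflexivity. Qed.

From Stdlib Require Import Reals Arith Lia Lra.
Open Scope R_scope.

(* Write  P_r(n) = (n+1)(n+2)...(n+r+1) = rising_from n (S r)  and
   a_r(n) = h_n^(r) / P_r(n)  for the terms of the series, and
   ρ_r(n) = h_n^(r) / ((n+2)...(n+r+1))  for an auxiliary "remainder".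

   The partial-fraction identity
     1/P_r(n) - 1/P_r(n+1) = (r+1) / P_{r+1}(n)
   together with the defining recurrence h_n^(r+1) = h_{n-1}^(r+1) + h_n^(r)
   makes  (r+1) a_{r+1}(n) - a_r(n)  telescope in n, which gives
     (r+1) S_{r+1}(N) = S_r(N) - ρ_{r+1}(N+1)
   for the partial sums S_r(N) = a_r(1) + ... + a_r(N+1).
   For r = 0 the partial sums are explicit: S_0(N) = 1 - 1/(N+2).
   Finally ρ_r(n) -> 0: ρ_0(n) = 1/n, and ρ_{r+1}(n) is bounded by the
   Cesàro mean of ρ_r(0..n), so Cesàro's lemma propagates the limit 0.
   Hence S_r(N) -> 1/r! by induction, which is the theorem. *)

Lemma Un_cv_const (c : R) : Un_cv (fun _ => c) c.
Proof.
  intros eps Heps; exists O; intros n _.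
  unfold Rdist; rewrite Rminus_diag, Rabs_R0; lra.
Qed.

Lemma Un_cv_0_squeeze (u v : nat -> R) :
  (forall n, 0 <= u n <= v n) -> Un_cv v 0 -> Un_cv u 0.
Proof.
  intros Huv Hv eps Heps; destruct (Hv eps Heps) as [N HN]; exists N.
  intros n Hn; specialize (HN n Hn); specialize (Huv n).
  unfold Rdist in *; rewrite Rminus_0_r in *.
  rewrite Rabs_right in * by lra; lra.
Qed.

Lemma inv_succ_cv_0 : Un_cv (fun n => / INR (S n)) 0.
Proof.
  apply (Un_cv_ext (fun n => pos (RinvN n))); [|exact RinvN_cv].
  intro n; rewrite S_INR; reflexivity.
Qed.

Lemma hyperharmonic_nonneg (r n : nat) : 0 <= hyperharmonic r n.
Proof.
  revert n; induction r as [|r IHr]; intro n.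
  - destruct n as [|n]; [simpl; lra|].
    rewrite hyperharmonic_0 by lia.
    left; apply Rinv_0_lt_compat, lt_0_INR; lia.
  - induction n as [|n IHn]; [simpl; lra|].
    rewrite hyperharmonic_S; specialize (IHr (S n)); lra.
Qed.

Lemma rising_from_pos (n k : nat) : 0 < rising_from n k.
Proof.
  induction k as [|k IHk]; simpl; [lra|].
  apply Rmult_lt_0_compat; [exact IHk | apply lt_0_INR; lia].
Qed.

Lemma rising_from_first (n k : nat) :
  rising_from n (S k) = INR (S n) * rising_from (S n) k.
Proof.
  induction k as [|k IHk].
  - change (1 * INR (n + 1) = INR (S n) * 1); rewrite Nat.add_1_r; ring.
  - change (rising_from n (S (S k))) with (rising_from n (S k) * INR (n + S (S k))).
    change (rising_from (S n) (S k)) with (rising_from (S n) k * INR (S n + S k)).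
    rewrite IHk; replace (S n + S k)%nat with (n + S (S k))%nat by lia; ring.
Qed.

Lemma rising_from_le_succ (n k : nat) : rising_from n k <= rising_from (S n) k.
Proof.
  induction k as [|k IHk]; [apply Rle_refl|].
  change (rising_from n k * INR (n + S k) <= rising_from (S n) k * INR (S n + S k)).
  apply Rmult_le_compat; [left; apply rising_from_pos | apply pos_INR | exact IHk |].
  apply le_INR; lia.
Qed.

Lemma rising_from_partial_fraction (n r : nat) :
  / rising_from n (S r) - / rising_from (S n) (S r)
  = INR (S r) / rising_from n (S (S r)).
Proof.
  assert (Hlast : rising_from n (S (S r)) = rising_from n (S r) * INR (n + S (S r)))
    by reflexivity.
  assert (Hfirst := rising_from_first n (S r)).
  assert (HP := rising_from_pos n (S r)).
  assert (HQ := rising_from_pos (S n) (S r)).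
  assert (HR := rising_from_pos n (S (S r))).
  rewrite plus_INR, !S_INR in *.
  apply (Rmult_eq_reg_r (rising_from n (S (S r)))); [|lra].
  unfold Rdiv; rewrite Rmult_minus_distr_r, Rmult_assoc, Rinv_l by lra.
  rewrite Hfirst at 2; rewrite Hlast at 1.
  field; lra.
Qed.

Definition term (r n : nat) : R := hyperharmonic r n / rising_from n (S r).
Definition remainder (r n : nat) : R := hyperharmonic r n / rising_from (S n) r.
Definition partial_sum (r N : nat) : R := sum_f_R0 (fun k => term r (S k)) N.

Lemma remainder_nonneg (r n : nat) : 0 <= remainder r n.
Proof.
  apply Rmult_le_pos; [apply hyperharmonic_nonneg|].
  left; apply Rinv_0_lt_compat, rising_from_pos.
Qed.

Lemma term_telescoping (r m : nat) :
  INR (S r) * term (S r) (S m)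
  = term r (S m) + remainder (S r) m - remainder (S r) (S m).
Proof.
  unfold term, remainder, Rdiv.
  rewrite (Rmult_comm (hyperharmonic (S r) (S m))), <- Rmult_assoc.
  change (INR (S r) * / rising_from (S m) (S (S r)))
    with (INR (S r) / rising_from (S m) (S (S r))).
  rewrite <- rising_from_partial_fraction, hyperharmonic_S; ring.
Qed.

Lemma partial_sum_succ (r N : nat) :
  INR (S r) * partial_sum (S r) N = partial_sum r N - remainder (S r) (S N).
Proof.
  unfold partial_sum; induction N as [|N IHN]; simpl sum_f_R0.
  - assert (Hstart : remainder (S r) 0 = 0) by apply Rmult_0_l.
    rewrite term_telescoping, Hstart; ring.
  - rewrite Rmult_plus_distr_l, IHN, term_telescoping; ring.
Qed.

Lemma partial_sum_0 (N : nat) : partial_sum 0 N = 1 - / INR (S (S N)).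
Proof.
  unfold partial_sum; induction N as [|N IHN].
  - unfold term; simpl; field.
  - rewrite tech5, IHN; unfold term.
    rewrite hyperharmonic_0, rising_from_first by lia; simpl rising_from.
    assert (0 <= INR N) by apply pos_INR.
    rewrite !S_INR; field; lra.
Qed.

(* h_n^(r+1) = sum_{k<=n} h_k^(r) = sum_{k<=n} (k+2)...(k+r+1) ρ_r(k), and the
   weights are at most (n+2)...(n+r+1). *)
Lemma hyperharmonic_le_remainder_sum (r n : nat) :
  hyperharmonic (S r) n <= rising_from (S n) r * sum_f_R0 (remainder r) n.
Proof.
  induction n as [|n IHn].
  - simpl sum_f_R0; simpl hyperharmonic at 1.
    apply Rmult_le_pos; [left; apply rising_from_pos | apply remainder_nonneg].
  - rewrite hyperharmonic_S, tech5, Rmult_plus_distr_l.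
    assert (Hsum : 0 <= sum_f_R0 (remainder r) n)
      by (apply cond_pos_sum; intro; apply remainder_nonneg).
    assert (Hpos := rising_from_pos (S (S n)) r).
    assert (Hh : hyperharmonic r (S n) = rising_from (S (S n)) r * remainder r (S n))
      by (unfold remainder; field; lra).
    rewrite Hh; apply Rplus_le_compat_r.
    apply (Rle_trans _ _ _ IHn), Rmult_le_compat_r; [exact Hsum|].
    apply rising_from_le_succ.
Qed.

Lemma remainder_le_mean (r n : nat) :
  remainder (S r) n <= sum_f_R0 (remainder r) n / INR (S n).
Proof.
  assert (Hsum : 0 <= sum_f_R0 (remainder r) n)
    by (apply cond_pos_sum; intro; apply remainder_nonneg).
  assert (HP := rising_from_pos (S n) r).
  assert (Hn : 0 < INR (S n)) by (apply lt_0_INR; lia).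
  assert (Hle : INR (S n) <= INR (S n + S r)) by (apply le_INR; lia).
  unfold remainder at 1.
  change (rising_from (S n) (S r)) with (rising_from (S n) r * INR (S n + S r)).
  apply (Rle_trans _ (rising_from (S n) r * sum_f_R0 (remainder r) n
                      / (rising_from (S n) r * INR (S n + S r)))).
  - apply Rmult_le_compat_r; [|apply hyperharmonic_le_remainder_sum].
    left; apply Rinv_0_lt_compat, Rmult_lt_0_compat; lra.
  - replace (rising_from (S n) r * sum_f_R0 (remainder r) n
             / (rising_from (S n) r * INR (S n + S r)))
      with (sum_f_R0 (remainder r) n / INR (S n + S r)) by (field; lra).
    apply Rmult_le_compat_l; [exact Hsum|].
    apply Rinv_le_contravar; lra.
Qed.

Lemma remainder_cv_0 (r : nat) : Un_cv (remainder r) 0.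
Proof.
  induction r as [|r IHr].
  -
    apply (CV_shift _ 1); apply (Un_cv_ext (fun n => / INR (S n))); [|exact inv_succ_cv_0].
    intro n; unfold remainder; rewrite Nat.add_1_r, hyperharmonic_0 by lia.
    simpl rising_from; unfold Rdiv; rewrite Rinv_1, Rmult_1_r; reflexivity.
  - apply (Un_cv_0_squeeze _ (fun n => sum_f_R0 (remainder r) n / INR (S n))).
    + intro n; split; [apply remainder_nonneg | apply remainder_le_mean].
    +
      apply (Un_cv_ext (fun n => sum_f_R0 (remainder r) (pred (n + 1)) / INR (n + 1))).
      { intro n; rewrite Nat.add_1_r; reflexivity. }
      exact (CV_shift' _ 1 _ (Cesaro_1 _ _ IHr)).
Qed.

Lemma partial_sum_cv (r : nat) : Un_cv (partial_sum r) (/ INR (fact r)).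
Proof.
  induction r as [|r IHr].
  - apply (Un_cv_ext (fun N => 1 - / INR (S (S N)))).
    { intro N; symmetry; apply partial_sum_0. }
    replace (/ INR (fact 0)) with (1 - 0) by (simpl; field).
    apply CV_minus; [apply Un_cv_const|].
    apply (Un_cv_ext (fun n => / INR (S (n + 1)))); [intro n; rewrite Nat.add_1_r; reflexivity|].
    exact (CV_shift' _ 1 _ inv_succ_cv_0).
  - assert (Hr : INR (S r) <> 0) by (apply not_0_INR; lia).
    apply (Un_cv_ext (fun N => (partial_sum r N - remainder (S r) (S N)) * / INR (S r))).
    { intro N; rewrite <- partial_sum_succ; field; exact Hr. }
    replace (/ INR (fact (S r))) with ((/ INR (fact r) - 0) * / INR (S r)).
    + apply CV_mult; [apply CV_minus; [exact IHr|] | apply Un_cv_const].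
      apply (Un_cv_ext (fun n => remainder (S r) (n + 1))); [intro n; rewrite Nat.add_1_r; reflexivity|].
      exact (CV_shift' _ 1 _ (remainder_cv_0 (S r))).
    + assert (0 < INR (fact r)) by apply lt_0_INR, lt_O_fact.
      rewrite fact_simpl, mult_INR; field; lra.
Qed.

Theorem proposition5 (r : nat) :
  infinite_sum
    (fun k : nat => hyperharmonic r (S k) / rising_from (S k) (S r))
    (/ INR (Factorial.fact r)).
Proof. exact (partial_sum_cv r). Qed.
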